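(* Let $n\ge 3$ and $x\in S_n$ avoid $123$. Then there exists $1\le i\le n-2$ with $|\mathrm{Act}_i(x;123)|=|\mathrm{Act}_{i+1}(x;123)|\le|\mathrm{Act}_{i+2}(x;123)|$ if and only if $x$ contains the bivincular pattern $132^{\star}$.
   Context: For $w=w_1\cdots w_{m}\in S_{m}$ and $1\le i\le m+1$, let $w^i$ be the permutation obtained by inserting $m+1$ immediately before $w_i$ (at the end if $i=m+1$). For a pattern $y$, site $i$ of $w$ is active with respect to $y$ if $w^i$ avoids $y$ (has no subsequence order-isomorphic to $y$). For $x\in S_n$ and $1\le k\le n$, let $\mathrm{small}_k(x)$ be the subsequence of $x$ formed by the entries $1,\dots,k$ (a permutation in $S_k$). For $1\le j\le n$, $\mathrm{Act}_j(x;y)$ is the set of active sites of $\mathrm{small}_{n+1-j}(x)$ with respect to $y$. (The word $|\mathrm{Act}_1(x;y)|\cdots|\mathrm{Act}_{n-1}(x;y)|$ is West's signature of $x$.) An occurrence of the bivincular pattern $132^{\star}$ in $x$ is a pair of indices $a<b<n$ with $x_a<x_{b+1}$ and $x_b=x_{b+1}+1$. *)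

(* Permutations of [n] are represented as sequences of
   naturals that are permutations of [:: 1; ...; n] (one-line notation). *)
From mathcomp Require Import all_boot.
Set Implicit Arguments. Unset Strict Implicit. Unset Printing Implicit Defensive.

(* 1-based entry access: xval w i = w_i *)
Definition xval (w : seq nat) (i : nat) : nat := nth 0 w i.-1.

Definition order_iso (s y : seq nat) : bool :=
  (size s == size y) &&
  all (fun i => all (fun j => (nth 0 s i < nth 0 s j) == (nth 0 y i < nth 0 y j))
                    (iota 0 (size y))) (iota 0 (size y)).

Fixpoint subseqs (w : seq nat) : seq (seq nat) :=
  if w is a :: w' then [seq a :: s | s <- subseqs w'] ++ subseqs w' else [:: [::]].

Definition contains (w y : seq nat) : bool :=
  has (fun s => order_iso s y) (subseqs w).

Definition avoids (w y : seq nat) : bool := ~~ contains w y.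

(* w^i : insert m+1 (m = size w) immediately before w_i (at end if i = m+1) *)
Definition ins (w : seq nat) (i : nat) : seq nat :=
  take i.-1 w ++ (size w).+1 :: drop i.-1 w.

Definition active_sites (w y : seq nat) : seq nat :=
  [seq i <- iota 1 (size w).+1 | avoids (ins w i) y].

Definition small (k : nat) (x : seq nat) : seq nat := [seq v <- x | v <= k].

Definition Act (j : nat) (x y : seq nat) : seq nat :=
  active_sites (small ((size x).+1 - j) x) y.

Definition contains_132star (x : seq nat) : Prop :=
  exists a b, [/\ 1 <= a, a < b, b < size x,
                  xval x a < xval x b.+1 & xval x b = (xval x b.+1).+1].

From mathcomp Require Import all_boot zify.

Set Implicit Arguments.
Unset Strict Implicit.
Unset Printing Implicit Defensive.

(* If [w] is a 123-avoiding permutation of [m], inserting [m+1] before [w_i]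
   creates a 123 exactly when [w_1 ... w_(i-1)] has an ascent, so the active
   sites are [1, ..., d+1] with [d = drun w] the length of the initial
   decreasing run of [w]; thus [|Act_(n+1-k)(x)| = 1 + drun (small_k x)].
   Write [small_k x = P ++ k :: Q]: [P] is decreasing, so when [P] is nonempty
   the run of [small_k x] stops at [k], and the runs of [small_k x] and
   [small_(k-1) x = P ++ Q] agree iff [P] is nonempty and [Q] does not start
   below the last entry [t] of [P].  The second condition, with [small_(k-2)],
   says that [k-1] does not head [small_(k-1) x], so [k-1] lies in [Q]; then
   [t < head Q <= k-1] and 123-avoidance force [k-1] to be the entry right
   after [k] in [x], which is an occurrence of [132*].  The converse is a
   direct computation of the three runs. *)

Definition has_incr3 (w : seq nat) : Prop :=
  exists a b c, subseq [:: a; b; c] w /\ a < b < c.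

Lemma mem_subseqs (s w : seq nat) : (s \in subseqs w) = subseq s w.
Proof.
elim: w s => [|a w IHw] [|b s] //=; rewrite mem_cat IHw ?sub0seq ?orbT //.
case: eqVneq => [->|neq_ba].
  have cons_inj : injective (cons a) by move=> u v [].
  rewrite (mem_map cons_inj) IHw.
  by apply/orP/idP => [[//|/cons_subseq//]|->]; left.
by rewrite orbC; apply: orb_idr => /mapP[t _ [eq_ba _]]; rewrite eq_ba eqxx in neq_ba.
Qed.

Lemma order_iso123 s :
  order_iso s [:: 1; 2; 3] = if s is [:: a; b; c] then a < b < c else false.
Proof.
case: s => [|a [|b [|c [|d s]]]] //; rewrite /order_iso /= !ltnn /=.
by case: (ltngtP a b); case: (ltngtP b c); case: (ltngtP a c) => //=; lia.
Qed.

Lemma contains123P w : contains w [:: 1; 2; 3] <-> has_incr3 w.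
Proof.
split=> [/hasP[s]|[a [b [c [abc_w lt_abc]]]]].
  rewrite mem_subseqs order_iso123.
  by case: s => [|a [|b [|c [|d s]]]] // abc_w lt_abc; exists a, b, c.
by apply/hasP; exists [:: a; b; c]; rewrite ?mem_subseqs ?order_iso123.
Qed.

Lemma has_incr3_subseq w w' : subseq w w' -> has_incr3 w -> has_incr3 w'.
Proof.
move=> ww' [a [b [c [abc_w lt_abc]]]].
by exists a, b, c; split=> //; apply: subseq_trans ww'.
Qed.

Lemma subseq_cat_split (T : eqType) (s s1 s2 : seq T) : subseq s (s1 ++ s2) ->
  exists u v, [/\ s = u ++ v, subseq u s1 & subseq v s2].
Proof.
case/subseqP=> m; rewrite size_cat => size_m ->.
exists (mask (take (size s1) m) s1), (mask (drop (size s1) m) s2).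
by rewrite -mask_cat ?cat_take_drop ?mask_subseq // size_takel // size_m leq_addr.
Qed.

Lemma not_sorted_gtn_ascent (p : seq nat) : uniq p -> ~~ sorted gtn p ->
  exists a b, subseq [:: a; b] p /\ a < b.
Proof.
elim: p => [|a [|b p] IHp] //= /andP[a_notin uniq_bp].
case: (ltnP b a) => [lt_ba|le_ab] /=.
  move=> /IHp[//|c [d [cd_p lt_cd]]].
  by exists c, d; split=> //; apply: subseq_trans cd_p (subseq_cons _ _).
exists a, b; rewrite /= !eqxx sub0seq ltn_neqAle le_ab andbT; split=> //.
by apply: contraNneq a_notin => ->; rewrite mem_head.
Qed.

Lemma ascent_max_has_incr3 p q M : all (fun v => v < M) p -> uniq p ->
  ~~ sorted gtn p -> has_incr3 (p ++ M :: q).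
Proof.
move=> lt_pM uniq_p /(not_sorted_gtn_ascent uniq_p)[a [b [ab_p lt_ab]]].
exists a, b, M; split.
  by rewrite -[[:: a; b; M]]/([:: a; b] ++ [:: M]) cat_subseq // sub1seq mem_head.
by rewrite lt_ab (allP lt_pM) // (mem_subseq ab_p) // !inE eqxx orbT.
Qed.

(* The maximum [M] can only be the last entry of an increasing triple, and the
   two entries before it cannot both come from the decreasing [p]. *)
Lemma has_incr3_remove_max p q M : sorted gtn p -> all (fun v => v < M) q ->
  has_incr3 (p ++ M :: q) -> has_incr3 (p ++ q).
Proof.
move=> sorted_p lt_qM [a [b [c [/subseq_cat_split[u [v [abc_uv u_p v_Mq]]] lt_abc]]]].
have from_q : subseq v q -> has_incr3 (p ++ q).
  by move=> v_q; exists a, b, c; rewrite abc_uv cat_subseq.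
case: v abc_uv v_Mq from_q => [|z v] /=; first by move=> _ _; apply; rewrite sub0seq.
case: eqVneq => [-> abc_uv v_q _|_ _ v_q from_q]; last exact: from_q.
have ltM y : y \in v -> y < M by move=> /(mem_subseq v_q)/(allP lt_qM).
case: u abc_uv u_p => [|a' [|b' [|c' [|d' u]]]] //=.
- by case=> eq_aM v_eq _; move: (ltM c); rewrite -v_eq !inE eqxx orbT; lia.
- by case=> _ eq_bM v_eq _; move: (ltM c); rewrite -v_eq inE eqxx; lia.
- case=> <- <- _ _ ab_p; have := subseq_sorted (rev_trans ltn_trans) ab_p sorted_p.
  by rewrite /= andbT; lia.
Qed.

Fixpoint drun (s : seq nat) : nat :=
  if s is a :: s' then
    if s' is b :: _ then (if b < a then (drun s').+1 else 1) else 1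
  else 0.

Lemma drun_le_size s : drun s <= size s.
Proof. by elim: s => [|a [|b s] IHs] //=; case: ifP. Qed.

Lemma drun_cons_gt0 a s : 0 < drun (a :: s).
Proof. by case: s => [|b s] //=; case: ifP. Qed.

Lemma drun_cons2 a b s :
  drun [:: a, b & s] = if b < a then (drun (b :: s)).+1 else 1.
Proof. by []. Qed.

Lemma sorted_take_drun s j : j <= size s -> sorted gtn (take j s) = (j <= drun s).
Proof.
elim: s j => [|a [|b s] IHs] [|[|j]] // le_js; rewrite drun_cons2.
  by case: ifP.
case: (ltnP b a) => [lt_ba|le_ab]; last by rewrite /= ltnNge le_ab.
by rewrite ltnS -IHs //= lt_ba.
Qed.

Lemma drun_cat_sorted p r : sorted gtn p -> size p <= drun (p ++ r).
Proof.
move=> sorted_p; rewrite -sorted_take_drun ?size_cat ?leq_addr //.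
by rewrite take_size_cat.
Qed.

Lemma drun_cons_max M q : all (fun v => v < M) q -> drun (M :: q) = (drun q).+1.
Proof. by case: q => [|b q] //= /andP[-> _]. Qed.

Lemma drun_cat a p b q : sorted gtn (a :: p) ->
  drun ((a :: p) ++ b :: q) =
    size (a :: p) + (if b < last a p then drun (b :: q) else 0).
Proof.
elim: p a => [|c p IHp] a /=; first by case: ifP; rewrite ?addn0 ?add1n.
by case/andP=> -> /IHp /= ->; rewrite addSn.
Qed.

Lemma filter_iota_leq m k : k <= m -> [seq i <- iota 1 m | i <= k] = iota 1 k.
Proof.
move=> le_km; rewrite -(subnKC le_km) iotaD filter_cat.
rewrite (all_filterP _) ?(eq_in_filter (a2 := pred0)) ?filter_pred0 ?cats0 //.
  by move=> i; rewrite mem_iota /=; lia.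
by apply/allP=> i; rewrite mem_iota /=; lia.
Qed.

Lemma avoids_ins123 m w i : perm_eq w (iota 1 m) -> ~ has_incr3 w ->
  avoids (ins w i) [:: 1; 2; 3] = sorted gtn (take i.-1 w).
Proof.
move=> w_perm w_free; rewrite /avoids /ins.
have lt_w v : v \in w -> v < (size w).+1.
  by rewrite (perm_mem w_perm) (perm_size w_perm) size_iota mem_iota; lia.
have w_uniq : uniq w by rewrite (perm_uniq w_perm) iota_uniq.
case: (boolP (sorted _ _)) => [sorted_take | not_sorted].
  apply/negP => /contains123P/has_incr3_remove_max; rewrite cat_take_drop.
  by move/(_ sorted_take) => incr3; apply/w_free/incr3/allP => v /mem_drop/lt_w.
apply/negPn/contains123P/ascent_max_has_incr3 => //; last exact: take_uniq.
by apply/allP=> v /mem_take; exact: lt_w.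
Qed.

Lemma active_sites123 m w : perm_eq w (iota 1 m) -> ~ has_incr3 w ->
  active_sites w [:: 1; 2; 3] = iota 1 (drun w).+1.
Proof.
move=> w_perm w_free; rewrite /active_sites.
rewrite -(@filter_iota_leq (size w).+1 (drun w).+1) ?ltnS ?drun_le_size //.
apply: eq_in_filter => i; rewrite mem_iota => /andP[_ lt_i].
by rewrite (avoids_ins123 _ w_perm) // sorted_take_drun; lia.
Qed.

Lemma uniq_cat_notin (T : eqType) (s1 s2 : seq T) y :
  uniq (s1 ++ s2) -> y \in s2 -> y \notin s1.
Proof. by rewrite cat_uniq => /and3P[_ /hasPn s12 _] /s12. Qed.

Lemma perm_small n x k : perm_eq x (iota 1 n) -> k <= n ->
  perm_eq (small k x) (iota 1 k).
Proof. by move=> x_perm le_kn; rewrite -(filter_iota_leq le_kn); apply: perm_filter. Qed.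

Lemma small_pred k s : 0 < k -> small k.-1 s = filter (predC1 k) (small k s).
Proof. by move=> k_gt0; rewrite /small -filter_predI; apply: eq_filter => v /=; lia. Qed.

Lemma small_pred_notin k s : k \notin s -> small k.-1 s = small k s.
Proof.
move=> k_notin; apply: eq_in_filter => v v_in.
have : v != k by apply: contraNneq k_notin => <-.
lia.
Qed.

Lemma small_notin_lt k s : k \notin s -> all (fun v => v < k) (small k s).
Proof.
move=> k_notin; apply/allP => v; rewrite mem_filter => /andP[le_vk v_in].
have : v != k by apply: contraNneq k_notin => <-.
lia.
Qed.

Definition star132_at (x : seq nat) (v : nat) : Prop :=
  exists X1 X2, x = X1 ++ v.+1 :: v :: X2 /\ has (fun u => u < v) X1.

Lemma star132P x : contains_132star x <-> exists v, star132_at x v.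
Proof.
split=> [[a [b [a_gt0 lt_ab lt_bx lt_xab eq_xb]]] | [v [X1 [X2 [x_eq]]]]].
  exists (xval x b.+1), (take b.-1 x), (drop b.+1 x); split.
    have b_eq : b.-1.+1 = b by lia.
    rewrite -{1}(cat_take_drop b.-1 x) (drop_nth 0) ?b_eq ?(drop_nth 0 lt_bx) -?eq_xb //.
    lia.
  apply/hasP; exists (xval x a) => //.
  have lt_ab' : a.-1 < b.-1 by lia.
  have le_bx : b.-1 <= size x := leq_trans (leq_pred b) (ltnW lt_bx).
  by rewrite /xval -(nth_take _ lt_ab') mem_nth // size_takel.
case/hasP=> u u_X1 lt_uv; exists (index u X1).+1, (size X1).+1.
rewrite /xval /= x_eq !nth_cat index_mem u_X1 nth_index // ltnn subnn.
have lt_X1 : (size X1).+1 < size X1 = false by rewrite ltnNge leqnSn.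
rewrite lt_X1 subSn // subnn size_cat /= !ltnS index_mem.
by split=> //; rewrite !addnS !ltnS leq_addr.
Qed.

Section SmallRuns.

Variables (n : nat) (x : seq nat).
Hypotheses (x_perm : perm_eq x (iota 1 n)) (x_free : ~ has_incr3 x).

Let x_uniq : uniq x. Proof. by rewrite (perm_uniq x_perm) iota_uniq. Qed.

Let x_mem w : (w \in x) = (0 < w <= n).
Proof. by rewrite (perm_mem x_perm) mem_iota; lia. Qed.

Let small_free k : ~ has_incr3 (small k x).
Proof. by move/(has_incr3_subseq (filter_subseq _ _)). Qed.

Lemma size_Act i : 0 < i ->
  size (Act i x [:: 1; 2; 3]) = (drun (small (n.+1 - i) x)).+1.
Proof.
move=> i_gt0; rewrite /Act (perm_size x_perm) size_iota.
by rewrite (active_sites123 (perm_small x_perm _)) ?size_iota //; lia.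
Qed.

Lemma small_split k X1 X2 : 0 < k -> x = X1 ++ k :: X2 ->
  [/\ small k x = small k X1 ++ k :: small k X2,
      small k.-1 x = small k X1 ++ small k X2,
      sorted gtn (small k X1),
      all (fun v => v < k) (small k X1) & all (fun v => v < k) (small k X2)].
Proof.
move=> k_gt0 x_eq; have small_x j : small j x = small j X1 ++ small j (k :: X2).
  by rewrite x_eq /small filter_cat.
have k_X1 : k \notin X1 by apply: uniq_cat_notin (mem_head k X2); rewrite -x_eq.
have /andP[k_X2 _] : uniq (k :: X2) by move: x_uniq; rewrite x_eq cat_uniq => /and3P[].
have lt_X1 := small_notin_lt k_X1; have lt_X2 := small_notin_lt k_X2.
have small_kx : small k x = small k X1 ++ k :: small k X2.
  by rewrite small_x /small /= leqnn.
split=> //.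
  rewrite small_x -(small_pred_notin k_X1) -(small_pred_notin k_X2); congr (_ ++ _).
  by rewrite /small /= ifF //; lia.
apply: contraT => /(ascent_max_has_incr3 (small k X2) lt_X1) incr3.
case: (@small_free k); rewrite small_kx.
by apply: incr3; apply: filter_uniq; move: x_uniq; rewrite x_eq cat_uniq => /andP[].
Qed.

Lemma drun_small_head k r : 0 < k -> small k x = k :: r ->
  drun (small k x) = (drun (small k.-1 x)).+1.
Proof.
move=> k_gt0 small_kx.
have /andP[k_r _] : uniq (k :: r) by rewrite -small_kx filter_uniq.
have -> : small k.-1 x = r.
  rewrite small_pred // small_kx /= eqxx /=.
  by apply/all_filterP/allP => v v_r /=; apply: contraNneq k_r => <-.
rewrite small_kx; apply: drun_cons_max; apply/allP => v v_r.
have : v \in small k x by rewrite small_kx inE v_r orbT.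
rewrite mem_filter => /andP[le_vk _]; have : v != k by apply: contraNneq k_r => <-.
lia.
Qed.

Lemma star132_at_drun v : star132_at x v ->
  drun (small v.+1 x) = drun (small v x) /\ drun (small v x) <= drun (small v.-1 x).
Proof.
case=> X1 [X2 [x_eq /hasP[u u_X1 lt_uv]]].
have v_gt0 : 0 < v by apply: leq_ltn_trans lt_uv.
have x_eq' : x = (X1 ++ [:: v.+1]) ++ v :: X2 by rewrite x_eq -catA.
have [small_Sv small_v sorted_P _ _] := small_split (ltn0Sn v) x_eq.
have [_ small_pv _ lt_P _] := small_split v_gt0 x_eq'.
have Sv_X1 : v.+1 \notin X1.
  by apply: uniq_cat_notin (mem_head _ (v :: X2)); rewrite -x_eq.
move: lt_P; rewrite small_Sv small_v small_pv.
have -> : small v (X1 ++ [:: v.+1]) = small v.+1 X1.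
  by rewrite -(small_pred_notin Sv_X1) /small filter_cat /= ltnn cats0.
have -> : small v.+1 (v :: X2) = v :: small v.+1 X2 by rewrite /small /= leqnSn.
have : u \in small v.+1 X1 by rewrite mem_filter u_X1 andbT; lia.
case: (small v.+1 X1) sorted_P => [|a p] // sorted_P _ lt_P.
have lt_t : last a p < v by apply: (allP lt_P); apply: mem_last.
have [ge_v ge_Sv] : (v < last a p = false) /\ (v.+1 < last a p = false) by lia.
rewrite !drun_cat // ge_v ge_Sv !addn0; split=> //.
exact: drun_cat_sorted.
Qed.

Lemma drun_small_eq k X1 X2 : 0 < k -> x = X1 ++ k :: X2 ->
  drun (small k x) = drun (small k.-1 x) ->
  exists a p, small k X1 = a :: p /\ forall b Q, small k X2 = b :: Q -> last a p < b.
Proof.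
move=> k_gt0 x_eq; have : uniq (small k.-1 x) := filter_uniq _ x_uniq.
have [-> -> sorted_P lt_P lt_Q] := small_split k_gt0 x_eq.
case: (small k X1) sorted_P lt_P => [|a p] sorted_P lt_P uniq_PQ.
  by rewrite drun_cons_max // => /esym/n_Sn.
move=> run_eq; exists a, p; split=> // b Q Q_eq; move: run_eq uniq_PQ; rewrite Q_eq.
have lt_tk : last a p < k by apply: (allP lt_P); apply: mem_last.
rewrite !drun_cat // ifF ?addn0; last by lia.
case: (ltngtP (last a p) b) => // [lt_bt | eq_tb] run_eq uniq_PQ.
  by have := drun_cons_gt0 b Q; lia.
by move: (uniq_cat_notin uniq_PQ (mem_head b Q)); rewrite -eq_tb mem_last.
Qed.

Lemma drun_star132_at v : 1 < v -> v < n ->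
  drun (small v.+1 x) = drun (small v x) -> drun (small v x) <= drun (small v.-1 x) ->
  star132_at x v.
Proof.
move=> v_gt1 lt_vn run_Sv run_v.
have [X1 [X2 x_eq]] : exists X1 X2, x = X1 ++ v.+1 :: X2.
  have : v.+1 \in x by rewrite x_mem; lia.
  by case/splitPr=> X1 X2; exists X1, X2.
have [small_Sv small_v sorted_P lt_P lt_Q] := small_split (ltn0Sn v) x_eq.
have [a [p [P_eq lt_tb]]] := drun_small_eq (ltn0Sn v) x_eq run_Sv.
rewrite P_eq in small_Sv small_v sorted_P lt_P.
have t_X1 : last a p \in X1 by move: (mem_last a p); rewrite -P_eq mem_filter => /andP[].
have v_Q : v \in small v.+1 X2.
  have : v \in small v x by rewrite mem_filter leqnn x_mem; lia.
  rewrite small_v mem_cat => /orP[v_P|//]; exfalso.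
  have a_v : a = v.
    move: v_P; rewrite inE => /orP[/eqP -> // | v_p].
    have := allP (order_path_min (rev_trans ltn_trans) sorted_P) v v_p.
    by have := allP lt_P a (mem_head a p); rewrite /=; lia.
  have small_v' : small v x = v :: (p ++ small v.+1 X2) by rewrite small_v a_v.
  by move: run_v; rewrite (drun_small_head _ small_v'); lia.
have lt_tv : last a p < v.+1 by apply: (allP lt_P); apply: mem_last.
case Q_eq : (small v.+1 X2) v_Q => [|b Q] // v_Q.
have lt_tb' := lt_tb b Q Q_eq.
have b_v : b = v.
  apply/eqP; apply: contraT => b_neq_v; case: (@small_free v.+1).
  have lt_bv : b < v by have := allP lt_Q b; rewrite Q_eq mem_head /=; lia.
  exists (last a p), b, v; split; last by rewrite lt_tb'.
  rewrite small_Sv Q_eq -[[:: _; b; v]]/([:: last a p] ++ [:: b; v]).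
  rewrite cat_subseq ?sub1seq ?mem_last // (subseq_trans _ (subseq_cons _ _)) //.
  by rewrite /= eqxx sub1seq; move: v_Q; rewrite inE eq_sym (negbTE b_neq_v).
move: Q_eq; case X2_eq : X2 => [|y X2'] // Q_eq.
case: (leqP y v.+1) => [le_y | lt_y]; last first.
  case: x_free; exists (last a p), v.+1, y; split; last by rewrite lt_tv.
  rewrite x_eq X2_eq -[[:: _; v.+1; y]]/([:: last a p] ++ [:: v.+1; y]).
  by rewrite cat_subseq ?sub1seq //= !eqxx sub0seq.
move: Q_eq; rewrite /small /= le_y => -[y_b _].
exists X1, X2'; split; first by rewrite x_eq X2_eq y_b b_v.
by apply/hasP; exists (last a p); rewrite -?b_v.
Qed.

Lemma star132_at_bounds v : star132_at x v -> 1 < v < n.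
Proof.
case=> X1 [X2 [x_eq /hasP[u u_X1 lt_uv]]].
have := x_mem u; have := x_mem v.+1.
by rewrite x_eq !mem_cat u_X1 !inE eqxx orbT /=; lia.
Qed.

End SmallRuns.

Theorem theorem3p12 (n : nat) (x : seq nat) :
  3 <= n -> perm_eq x (iota 1 n) -> avoids x [:: 1; 2; 3] ->
  ((exists i, [/\ 1 <= i, i <= n - 2,
       size (Act i x [:: 1; 2; 3]) = size (Act i.+1 x [:: 1; 2; 3]) &
       size (Act i.+1 x [:: 1; 2; 3]) <= size (Act i.+2 x [:: 1; 2; 3])])
   <-> contains_132star x).
Proof.
move=> _ x_perm x_avoids; have x_free : ~ has_incr3 x by move/contains123P; apply/negP.
have Act_drun := size_Act x_perm x_free.
rewrite star132P; split=> [[i [i_gt0 le_in run_eq run_le]] | [v star_v]].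
  have [e0 e1 e2] : [/\ n.+1 - i = (n - i).+1, n.+1 - i.+1 = n - i
                       & n.+1 - i.+2 = (n - i).-1] by split; lia.
  move: run_eq run_le; rewrite !Act_drun // e0 e1 e2 ltnS => /succn_inj run_eq run_le.
  by exists (n - i); apply: (drun_star132_at x_perm x_free _ _ run_eq run_le); lia.
have /andP[v_gt1 lt_vn] := star132_at_bounds x_perm star_v.
have [run_eq run_le] := star132_at_drun x_perm x_free star_v.
have [e0 e1 e2] : [/\ n.+1 - (n - v) = v.+1, n.+1 - (n - v).+1 = v
                     & n.+1 - (n - v).+2 = v.-1] by split; lia.
exists (n - v); rewrite !Act_drun ?subn_gt0 // e0 e1 e2 run_eq ltnS; split=> //; lia.
Qed.
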